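(* Let $G$ be a structurally saturated sequent. Then the relation $R_G$ on clusters of $G$ is a (partial) order and the relation $\le_G$ on clusters of $G$ is a preorder. If moreover $G$ is layered, then $\le_G$ on clusters is also an order.
   Context: A sequent $G$ is $\mathcal{R},\Gamma\Rightarrow\Delta$ with $\mathcal{R}$ a set of relational atoms $xRy$, $x\le y$ between labels and $\Gamma,\Delta$ multisets of labelled formulas $x{:}A$; $x\le_G y$, $xR_Gy$ mean the atom is in $\mathcal{R}$, and $x{:}C^\bullet$ means $x{:}C\in\Gamma$. $G$ is structurally saturated if: $x\le_G y$ and $x{:}C^\bullet$ imply $y{:}C^\bullet$; $xR_Gy$ and $y\le_G z$ imply some $u$ with $x\le_G u$, $uR_Gz$; $xR_Gy$ and $x\le_G z$ imply some $u$ with $y\le_G u$, $zR_Gu$; $\le_G$ and $R_G$ are transitive and reflexive on all labels. For structurally saturated $G$, a cluster is an equivalence class of $R_G\cap R_G^{-1}$. On clusters: $C_1\le_G C_2$ iff for every $y\in C_2$ there is $x\in C_1$ with $x\le_G y$; $C_1 R_G C_2$ iff there are $x\in C_1$, $y\in C_2$ with $xR_Gy$. A layer is an equivalence class of the reflexive-transitive closure of $R_G\cup R_G^{-1}$. $G$ is layered if for all labels $x,x',y,y'$: (1) if $x,y$ are in the same layer and $x\ne y$, then neither $x\le_G y$ nor $y\le_G x$; (2) if $x,y$ are in the same layer, $x',y'$ are in the same layer, $x\le_G x'$ and $x\ne x'$, then not $y'\le_G y$. *)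

From Stdlib Require Import List Relations.
Import ListNotations.

Definition label := nat.

(* Formulas of intuitionistic modal logic (the only property of formulas used
   by the statement is equality, in the persistence condition). *)
Inductive form : Type :=
| Var : nat -> form
| Bot : form
| And : form -> form -> form
| Or  : form -> form -> form
| Imp : form -> form -> form
| Box : form -> form
| Dia : form -> form.

Inductive ratom : Type :=
| ARel : label -> label -> ratom
| ALe  : label -> label -> ratom.

Definition lform := (label * form)%type.

(* A sequent  R, Gamma => Delta  (multisets represented by lists). *)
Record sequent := Sequent {
  rel   : list ratom;
  gamma : list lform;
  delta : list lform
}.

Definition leG (G : sequent) (x y : label) : Prop := In (ALe x y) (rel G).
Definition RG  (G : sequent) (x y : label) : Prop := In (ARel x y) (rel G).

Definition is_label (G : sequent) (x : label) : Prop :=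
  (exists y, In (ARel x y) (rel G) \/ In (ARel y x) (rel G)
          \/ In (ALe x y) (rel G) \/ In (ALe y x) (rel G))
  \/ (exists A, In (x, A) (gamma G))
  \/ (exists A, In (x, A) (delta G)).

Definition struct_saturated (G : sequent) : Prop :=
  (forall x y C, leG G x y -> In (x, C) (gamma G) -> In (y, C) (gamma G)) /\
  (forall x y z, RG G x y -> leG G y z -> exists u, leG G x u /\ RG G u z) /\
  (forall x y z, RG G x y -> leG G x z -> exists u, leG G y u /\ RG G z u) /\
  (forall x y z, leG G x y -> leG G y z -> leG G x z) /\
  (forall x y z, RG G x y -> RG G y z -> RG G x z) /\
  (forall x, is_label G x -> leG G x x) /\
  (forall x, is_label G x -> RG G x x).

Definition cluster_of (G : sequent) (x : label) : label -> Prop :=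
  fun y => RG G x y /\ RG G y x.

Definition is_cluster (G : sequent) (C : label -> Prop) : Prop :=
  exists x, is_label G x /\ C = cluster_of G x.

Definition cle (G : sequent) (C1 C2 : label -> Prop) : Prop :=
  forall y, C2 y -> exists x, C1 x /\ leG G x y.

Definition cR (G : sequent) (C1 C2 : label -> Prop) : Prop :=
  exists x y, C1 x /\ C2 y /\ RG G x y.

Definition preorder_on {T : Type} (P : T -> Prop) (r : T -> T -> Prop) : Prop :=
  (forall a, P a -> r a a) /\
  (forall a b c, P a -> P b -> P c -> r a b -> r b c -> r a c).

Definition order_on {T : Type} (P : T -> Prop) (r : T -> T -> Prop) : Prop :=
  preorder_on P r /\
  (forall a b, P a -> P b -> r a b -> r b a -> a = b).

Definition same_layer (G : sequent) : label -> label -> Prop :=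
  clos_refl_trans label (fun a b => RG G a b \/ RG G b a).

Definition layered (G : sequent) : Prop :=
  (forall x y, is_label G x -> is_label G y ->
     same_layer G x y -> x <> y -> ~ leG G x y /\ ~ leG G y x) /\
  (forall x x' y y', is_label G x -> is_label G x' -> is_label G y -> is_label G y' ->
     same_layer G x y -> same_layer G x' y' -> leG G x x' -> x <> x' ->
     ~ leG G y' y).

From Stdlib Require Import Relations FunctionalExtensionality PropExtensionality PeanoNat.

(* Clusters are the classes of the equivalence R_G ∩ R_G^-1, so R_G lifted to
   clusters inherits reflexivity and transitivity, and two clusters related
   both ways share a representative pair, hence coincide; likewise ≤_G lifts
   to a preorder.  For antisymmetry of ≤_G in a layered sequent, let
   [x] ≤ [y] ≤ [x], and pick a ∈ [x] with a ≤ y and b ∈ [y] with b ≤ x.  If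
   a ≠ y, then a ≤ y is a strict step from the layer of x to that of y while
   b ≤ x goes back, which the second layering condition forbids; so a = y
   and y ∈ [x]. *)

Lemma RG_is_label_l (G : sequent) (x y : label) : RG G x y -> is_label G x.
Proof. intro Hxy. left. exists y. left. exact Hxy. Qed.

Lemma RG_is_label_r (G : sequent) (x y : label) : RG G x y -> is_label G y.
Proof. intro Hxy. left. exists x. right. left. exact Hxy. Qed.

Section Clusters.

Variable G : sequent.

Hypothesis RG_trans : forall x y z, RG G x y -> RG G y z -> RG G x z.
Hypothesis RG_refl : forall x, is_label G x -> RG G x x.
Hypothesis leG_trans : forall x y z, leG G x y -> leG G y z -> leG G x z.
Hypothesis leG_refl : forall x, is_label G x -> leG G x x.

Lemma cluster_of_refl (x : label) : is_label G x -> cluster_of G x x.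
Proof. intro Hx. split; apply RG_refl; exact Hx. Qed.

Lemma cluster_of_eq (x y : label) :
  RG G x y -> RG G y x -> cluster_of G x = cluster_of G y.
Proof.
  intros Hxy Hyx.
  apply functional_extensionality; intro z; apply propositional_extensionality.
  unfold cluster_of; split; intros [Hz1 Hz2]; split; eauto.
Qed.

Lemma cR_order : order_on (is_cluster G) (cR G).
Proof.
  split; [split|].
  - intros C (x & Hx & ->). exists x, x. auto using cluster_of_refl.
  - intros C1 C2 C3 (x & _ & ->) (y & _ & ->) (z & _ & ->)
      (a & b & [Hxa Hax] & [Hyb Hby] & Hab) (b' & c & [Hyb' Hb'y] & [Hzc Hcz] & Hb'c).
    exists a, c. repeat split; try assumption.
    apply (RG_trans a b c Hab), (RG_trans b y c Hby), (RG_trans y b' c Hyb' Hb'c).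
  - intros C1 C2 (x & _ & ->) (y & _ & ->)
      (a & b & [Hxa Hax] & [Hyb Hby] & Hab) (b' & a' & [Hyb' Hb'y] & [Hxa' Ha'x] & Hb'a').
    apply cluster_of_eq; eauto.
Qed.

Lemma cle_preorder : preorder_on (is_cluster G) (cle G).
Proof.
  split.
  - intros C (x & _ & ->) y Hy. exists y. split; [exact Hy|].
    apply leG_refl. destruct Hy as [Hxy _]. exact (RG_is_label_r _ _ _ Hxy).
  - intros C1 C2 C3 _ _ _ H12 H23 z Hz.
    destruct (H23 z Hz) as (y & Hy & Hyz). destruct (H12 y Hy) as (x & Hx & Hxy).
    exists x. eauto.
Qed.

Lemma cle_antisym_layered (C1 C2 : label -> Prop) :
  layered G -> is_cluster G C1 -> is_cluster G C2 ->
  cle G C1 C2 -> cle G C2 C1 -> C1 = C2.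
Proof.
  intros [_ no_return] (x & Hx & ->) (y & Hy & ->) Hxy Hyx.
  destruct (Hxy y (cluster_of_refl y Hy)) as (a & Ha & Hay).
  destruct (Hyx x (cluster_of_refl x Hx)) as (b & Hb & Hbx).
  destruct (Nat.eq_dec a y) as [-> | Hay_neq].
  - destruct Ha as [Hxy' Hyx']. exact (cluster_of_eq x y Hxy' Hyx').
  - exfalso.
    destruct Ha as [Hxa Hax], Hb as [Hyb Hby].
    apply (no_return a y x b); eauto using RG_is_label_l, RG_is_label_r.
    + apply rt_step. right. exact Hxa.
    + apply rt_step. left. exact Hyb.
Qed.

End Clusters.

Theorem mainTheorem5 (G : sequent) :
  struct_saturated G ->
  order_on (is_cluster G) (cR G) /\
  preorder_on (is_cluster G) (cle G) /\
  (layered G -> order_on (is_cluster G) (cle G)).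
Proof.
  intros (_ & _ & _ & leG_trans & RG_trans & leG_refl & RG_refl).
  pose proof (cle_preorder G leG_trans leG_refl) as Hpre.
  split; [|split].
  - exact (cR_order G RG_trans RG_refl).
  - exact Hpre.
  - intro Hlay. split; [exact Hpre|].
    intros C1 C2. exact (cle_antisym_layered G RG_trans RG_refl C1 C2 Hlay).
Qed.
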